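(* Let $A$ be a system of $n_A$ qubits and $B$ a system of $n_B$ qubits, and let $\mathcal{P}$ be a CPTP map from operators on $H_{A_1}\otimes H_{B_1}$ (time $t_1$) to operators on $H_{A_2}\otimes H_{B_2}$ (time $t_2$) that allows signalling in neither direction, i.e. there exist completely positive maps $\mathcal{T}$ (from $A_1$ to $A_2$) and $\mathcal{S}$ (from $B_1$ to $B_2$) with $\mathrm{Tr}_{B_2}\mathcal{P}(\rho)=\mathcal{T}(\mathrm{Tr}_{B_1}\rho)$ and $\mathrm{Tr}_{A_2}\mathcal{P}(\rho)=\mathcal{S}(\mathrm{Tr}_{A_1}\rho)$ for all states $\rho$ on $H_{A_1}\otimes H_{B_1}$. Then for every state $\rho_{A_1B_1}$ at time $t_1$, the pseudo-density matrices $R_{B_1A_2}$ and $R_{A_1B_2}$ are positive semidefinite and $f(R_{B_1A_2})=f(R_{A_1B_2})=0$.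
   Context: Pauli matrices $\sigma_0=\mathbb{1},\sigma_1,\sigma_2,\sigma_3$; multi-qubit Pauli matrices are tensor products of these. The coarse-grained measurement of a Pauli matrix $\Sigma$ on the full system $AB$ is the projective measurement $\{(\mathbb{1}\pm\Sigma)/2\}$ with outcomes $\pm1$ and Lüders update $\rho\mapsto P_\pm\rho P_\pm$. For an $n_B$-qubit Pauli $\tilde\sigma_j$ and an $n_A$-qubit Pauli $\tilde\sigma_k$: $\langle\tilde\sigma_j^{B_1},\tilde\sigma_k^{A_2}\rangle$ is the expected product of outcomes in the experiment: prepare $\rho_{A_1B_1}$, coarse-grained measurement of $\mathbb{1}_A\otimes\tilde\sigma_j$ at $t_1$, apply $\mathcal{P}$, coarse-grained measurement of $\tilde\sigma_k\otimes\mathbb{1}_B$ at $t_2$; and $R_{B_1A_2}=2^{-(n_A+n_B)}\sum_{j,k}\langle\tilde\sigma_j^{B_1},\tilde\sigma_k^{A_2}\rangle\,\tilde\sigma_j\otimes\tilde\sigma_k$. Analogously, $R_{A_1B_2}=2^{-(n_A+n_B)}\sum_{i,l}\langle\tilde\sigma_i^{A_1},\tilde\sigma_l^{B_2}\rangle\,\tilde\sigma_i\otimes\tilde\sigma_l$ with measurement of $\tilde\sigma_i\otimes\mathbb{1}_B$ at $t_1$ and $\mathbb{1}_A\otimes\tilde\sigma_l$ at $t_2$. The PDM negativity is $f(R)=\mathrm{Tr}\sqrt{RR^\dagger}-1$. *)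

From HB Require Import structures.
From mathcomp Require Import all_boot all_order all_algebra.
From mathcomp Require Import mxtens.
From Stdlib Require Import ClassicalEpsilon.
Set Implicit Arguments. Unset Strict Implicit. Unset Printing Implicit Defensive.
Import Order.TTheory GRing.Theory Num.Theory Num.Def.
Local Open Scope ring_scope.

(* pow2 n = 2^n : dimension of the Hilbert space of n qubits *)
Fixpoint pow2 (n : nat) : nat := match n with 0 => 1 | S n' => 2 * pow2 n' end.

Section QDefs.
Variable C : numClosedFieldType.

Definition adjmx m n (M : 'M[C]_(m, n)) : 'M[C]_(n, m) := (map_mx conjC M)^T.

Definition psd n (M : 'M[C]_n) : Prop :=
  M = adjmx M /\ forall v : 'cV[C]_n, 0 <= (adjmx v *m M *m v) ord0 ord0.

Definition state n (M : 'M[C]_n) : Prop := psd M /\ \tr M = 1.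

(* Tensor ordering: H_X (x) H_Y is indexed by mxtens_index (x, y). *)
Definition ptr2 m n (M : 'M[C]_(m * n)) : 'M[C]_m :=
  \matrix_(i, j) \sum_(k < n) M (mxtens_index (i, k)) (mxtens_index (j, k)).
Definition ptr1 m n (M : 'M[C]_(m * n)) : 'M[C]_n :=
  \matrix_(i, j) \sum_(k < m) M (mxtens_index (k, i)) (mxtens_index (k, j)).

(* (id_k (x) Phi) applied to an operator on C^k (x) C^m *)
Definition ampl k m n (Phi : 'M[C]_m -> 'M[C]_n) (X : 'M[C]_(k * m)) : 'M[C]_(k * n) :=
  \matrix_(p, q)
    Phi (\matrix_(i, j) X (mxtens_index ((mxtens_unindex p).1, i))
                          (mxtens_index ((mxtens_unindex q).1, j)))
        (mxtens_unindex p).2 (mxtens_unindex q).2.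

Definition cp m n (Phi : 'M[C]_m -> 'M[C]_n) : Prop :=
  forall (k : nat) (X : 'M[C]_(k * m)), psd X -> psd (ampl Phi X).

Definition tp m n (Phi : 'M[C]_m -> 'M[C]_n) : Prop :=
  forall X, \tr (Phi X) = \tr X.

Definition pauli1 (i : 'I_4) : 'M[C]_2 :=
  match val i with
  | 0 => 1%:M
  | 1 => \matrix_(r, c) (if r == c then 0 else 1)
  | 2 => \matrix_(r, c) (if r == c then 0 else if r == ord0 then - 'i else 'i)
  | _ => \matrix_(r, c) (if r == c then (if r == ord0 then 1 else -1) else 0)
  end.

Fixpoint pauliN (n : nat) (f : nat -> 'I_4) : 'M[C]_(pow2 n) :=
  match n with
  | 0 => 1%:M
  | S n' => pauli1 (f 0%N) *t pauliN n' (fun i => f i.+1)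
  end.

Definition pauli n (j : n.-tuple 'I_4) : 'M[C]_(pow2 n) :=
  pauliN n (fun i => nth ord0 j i).

(* projector of the coarse-grained measurement of Sigma with outcome s = +-1 *)
Definition proj n (s : C) (Sig : 'M[C]_n) : 'M[C]_n := 2^-1 *: (1%:M + s *: Sig).

(* expected product of outcomes: prepare rho, measure Sig1 (Lueders update),
   apply P, measure Sig2 *)
Definition corr n (P : 'M[C]_n -> 'M[C]_n) (rho Sig1 Sig2 : 'M[C]_n) : C :=
  \sum_(a <- [:: 1; -1]) \sum_(b <- [:: 1; -1])
    a * b * \tr (proj b Sig2 *m P (proj a Sig1 *m rho *m proj a Sig1) *m proj b Sig2).

Definition R_B1A2 nA nB (P : 'M[C]_(pow2 nA * pow2 nB) -> 'M[C]_(pow2 nA * pow2 nB))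
  (rho : 'M[C]_(pow2 nA * pow2 nB)) : 'M[C]_(pow2 nB * pow2 nA) :=
  ((2 : C) ^+ (nA + nB))^-1 *:
    \sum_(j : nB.-tuple 'I_4) \sum_(k : nA.-tuple 'I_4)
      corr P rho ((1%:M : 'M[C]_(pow2 nA)) *t pauli j)
                 (pauli k *t (1%:M : 'M[C]_(pow2 nB)))
      *: (pauli j *t pauli k).

Definition R_A1B2 nA nB (P : 'M[C]_(pow2 nA * pow2 nB) -> 'M[C]_(pow2 nA * pow2 nB))
  (rho : 'M[C]_(pow2 nA * pow2 nB)) : 'M[C]_(pow2 nA * pow2 nB) :=
  ((2 : C) ^+ (nA + nB))^-1 *:
    \sum_(i : nA.-tuple 'I_4) \sum_(l : nB.-tuple 'I_4)
      corr P rho (pauli i *t (1%:M : 'M[C]_(pow2 nB)))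
                 ((1%:M : 'M[C]_(pow2 nA)) *t pauli l)
      *: (pauli i *t pauli l).

Definition sqrtm n (M : 'M[C]_n) : 'M[C]_n :=
  epsilon (inhabits 0) (fun S => psd S /\ S *m S = M).

Definition pdm_neg n (R : 'M[C]_n) : C := \tr (sqrtm (R *m adjmx R)) - 1.

Definition no_signalling nA nB
  (P : 'M[C]_(pow2 nA * pow2 nB) -> 'M[C]_(pow2 nA * pow2 nB)) : Prop :=
  exists (T : {linear 'M[C]_(pow2 nA) -> 'M[C]_(pow2 nA)})
         (S : {linear 'M[C]_(pow2 nB) -> 'M[C]_(pow2 nB)}),
    cp T /\ cp S /\
    forall rho : 'M[C]_(pow2 nA * pow2 nB), state rho ->
      ptr2 (P rho) = T (ptr2 rho) /\ ptr1 (P rho) = S (ptr1 rho).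

End QDefs.

(* The Lüders rule makes each correlator linear in P:
     <S1, S2> = tr (S2 P (1/2 {S1, rho})),
   and 1/2 {S1, rho} is the difference of the two (positive) post-measurement
   operators, so the no-signalling identities, which hold on states and hence
   by linearity on all positive operators, apply to it.  When S2 acts on one
   party only this gives tr (S2 T (Tr_B (1/2 {S1, rho}))), resp. with S and
   Tr_A.  Expanding in the Pauli operator basis, using
     sum_j (sigma_j)_pq (sigma_j)_rs = 2^n [p = s] [q = r],
   identifies R_A1B2 with (id (x) S) rho and R_B1A2 with (id (x) T) applied
   to rho with its tensor factors swapped.  Both are positive by complete
   positivity and have trace tr rho = 1 by trace preservation, and a positive
   R has R R^dag = R^2 with positive square root R, so f(R) = tr R - 1 = 0. *)

From HB Require Import structures.
From mathcomp Require Import all_boot all_order all_algebra.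
From mathcomp Require Import mxtens.
From Stdlib Require Import ClassicalEpsilon.
From mathcomp Require Import ring.
Set Implicit Arguments. Unset Strict Implicit. Unset Printing Implicit Defensive.
Import Order.TTheory GRing.Theory Num.Theory.
Local Open Scope ring_scope.

Section Adjoint.
Variable C : numClosedFieldType.

Lemma adjmxE m n (M : 'M[C]_(m, n)) i j : adjmx M i j = (M j i)^*.
Proof. by rewrite !mxE. Qed.

Lemma adjmxK m n (M : 'M[C]_(m, n)) : adjmx (adjmx M) = M.
Proof. by apply/matrixP=> i j; rewrite !adjmxE conjCK. Qed.

Lemma adjmxM m n p (A : 'M[C]_(m, n)) (B : 'M[C]_(n, p)) :
  adjmx (A *m B) = adjmx B *m adjmx A.
Proof. by rewrite /adjmx map_mxM trmx_mul. Qed.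

Lemma adjmxD m n (A B : 'M[C]_(m, n)) : adjmx (A + B) = adjmx A + adjmx B.
Proof. by apply/matrixP=> i j; rewrite !(adjmxE, mxE) rmorphD. Qed.

Lemma adjmxB m n (A B : 'M[C]_(m, n)) : adjmx (A - B) = adjmx A - adjmx B.
Proof. by apply/matrixP=> i j; rewrite !(adjmxE, mxE) rmorphB. Qed.

Lemma adjmxZ m n a (A : 'M[C]_(m, n)) : adjmx (a *: A) = a^* *: adjmx A.
Proof. by apply/matrixP=> i j; rewrite !(adjmxE, mxE) rmorphM. Qed.

Lemma adjmx1 n : adjmx (1%:M : 'M[C]_n) = 1%:M.
Proof. by apply/matrixP=> i j; rewrite !(adjmxE, mxE) eq_sym rmorph_nat. Qed.

Lemma adjmxT m n p q (A : 'M[C]_(m, n)) (B : 'M[C]_(p, q)) :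
  adjmx (A *t B) = adjmx A *t adjmx B.
Proof. by apply/matrixP=> i j; rewrite !(adjmxE, mxE) rmorphM. Qed.

Lemma adjmx_delta m n (i : 'I_m) (j : 'I_n) :
  adjmx (delta_mx i j : 'M[C]_(m, n)) = delta_mx j i.
Proof. by apply/matrixP=> a b; rewrite !(adjmxE, mxE) rmorph_nat andbC. Qed.

End Adjoint.

Section Positivity.
Variable C : numClosedFieldType.

Definition sesq n (S : 'M[C]_n) (x y : 'cV[C]_n) : C := (adjmx x *m S *m y) 0 0.

Lemma sesq_conj n (S : 'M[C]_n) x y : adjmx S = S -> (sesq S x y)^* = sesq S y x.
Proof. by move=> hS; rewrite /sesq -adjmxE !adjmxM adjmxK hS mulmxA. Qed.

Lemma sesqDl n (S : 'M[C]_n) x1 x2 y : sesq S (x1 + x2) y = sesq S x1 y + sesq S x2 y.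
Proof. by rewrite /sesq adjmxD !mulmxDl mxE. Qed.

Lemma sesqDr n (S : 'M[C]_n) x y1 y2 : sesq S x (y1 + y2) = sesq S x y1 + sesq S x y2.
Proof. by rewrite /sesq !mulmxDr mxE. Qed.

Lemma sesqZl n (S : 'M[C]_n) a x y : sesq S (a *: x) y = a^* * sesq S x y.
Proof. by rewrite /sesq adjmxZ -!scalemxAl mxE. Qed.

Lemma sesqZr n (S : 'M[C]_n) a x y : sesq S x (a *: y) = a * sesq S x y.
Proof. by rewrite /sesq -!scalemxAr mxE. Qed.

Lemma sesq_deltal n (S : 'M[C]_n) i y : sesq S (delta_mx i 0) y = (S *m y) i 0.
Proof. by rewrite /sesq adjmx_delta -rowE -row_mul mxE. Qed.

Lemma sesq_delta n (S : 'M[C]_n) i : sesq S (delta_mx i 0) (delta_mx i 0) = S i i.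
Proof. by rewrite sesq_deltal -colE mxE. Qed.

Lemma psd_sesq_ge0 n (S : 'M[C]_n) v : psd S -> 0 <= sesq S v v.
Proof. by case=> _; apply. Qed.

Lemma psd_diag_ge0 n (S : 'M[C]_n) i : psd S -> 0 <= S i i.
Proof. by move/(psd_sesq_ge0 (delta_mx i 0)); rewrite sesq_delta. Qed.

Lemma psd_sesq_eq0 n (S : 'M[C]_n) v : psd S -> sesq S v v = 0 -> S *m v = 0.
Proof.
move=> psdS v0; apply/matrixP=> i j; rewrite ord1 [RHS]mxE.
set c := (S *m v) i 0; set a := S i i.
have a_ge0 : 0 <= a := psd_diag_ge0 i psdS.
have a_real : a^* = a by apply/conj_Creal/ger0_real.
have := psd_sesq_ge0 ((a + 1) *: v + (- c) *: delta_mx i 0) psdS.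
rewrite !(sesqDl, sesqDr, sesqZl, sesqZr) v0 sesq_delta sesq_deltal -/c.
rewrite -(sesq_conj _ _ (esym psdS.1)) sesq_deltal -/c -/a.
rewrite rmorphD /= rmorph1 a_real rmorphN => pos.
have : 0 <= - ((c * c^*) * (a + 2)) by move: pos; congr (_ <= _); ring.
rewrite oppr_ge0 -normCK pmulr_lle0; last by rewrite ltr_wpDl.
by move=> c_le0; apply/eqP; rewrite -normr_eq0 -sqrf_eq0 eq_le c_le0 exprn_ge0.
Qed.

Lemma psd_conj m n (W : 'M[C]_(m, n)) S : psd S -> psd (adjmx W *m S *m W).
Proof.
case=> hS posS; split; first by rewrite !adjmxM adjmxK -hS mulmxA.
by move=> v; have := posS (W *m v); rewrite adjmxM !mulmxA.
Qed.

Lemma psd1 n : psd (1%:M : 'M[C]_n).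
Proof.
split=> [|v]; first by rewrite adjmx1.
rewrite mulmx1 mxE; apply: sumr_ge0 => k _.
by rewrite adjmxE mulrC -normCK exprn_ge0.
Qed.

Lemma psdD n (A B : 'M[C]_n) : psd A -> psd B -> psd (A + B).
Proof.
move=> [hA posA] [hB posB]; split; first by rewrite adjmxD -hA -hB.
by move=> v; rewrite mulmxDr mulmxDl mxE addr_ge0.
Qed.

Lemma psdZ n c (A : 'M[C]_n) : 0 <= c -> psd A -> psd (c *: A).
Proof.
move=> c_ge0 [hA posA]; have c_real : c^* = c by apply/conj_Creal/ger0_real.
split=> [|v]; first by rewrite adjmxZ c_real -hA.
by rewrite -scalemxAr -scalemxAl mxE mulr_ge0.
Qed.

Lemma psd_mxtrace_ge0 n (A : 'M[C]_n) : psd A -> 0 <= \tr A.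
Proof. by move=> psdA; apply: sumr_ge0 => i _; apply: psd_diag_ge0. Qed.

Lemma mxtrace_sesq m n (D : 'M[C]_(m, n)) S :
  \tr (adjmx D *m S *m D) = \sum_i sesq S (col i D) (col i D).
Proof.
apply: eq_bigr => i _; rewrite /sesq colE -[in RHS]mulmxA -!mulmxA.
by rewrite adjmxM adjmx_delta -rowE -row_mul !mulmxA -colE !mxE.
Qed.

Lemma psd_mxtrace_conj_eq0 m n (D : 'M[C]_(m, n)) S :
  psd S -> \tr (adjmx D *m S *m D) = 0 -> S *m D = 0.
Proof.
move=> psdS; rewrite mxtrace_sesq => /psumr_eq0P D0.
apply/matrixP=> a i; rewrite mxE.
have /(psd_sesq_eq0 psdS)/matrixP/(_ a 0) : sesq S (col i D) (col i D) = 0.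
  by apply: D0 => // k _; apply: psd_sesq_ge0.
by rewrite colE mulmxA -colE !mxE.
Qed.

(* S^2 = R^2 makes D = S - R satisfy S D = - D R, so that
   tr (D S D) + tr (D R D) = 0 with both terms nonnegative. *)
Lemma psd_sqr_inj n (S R : 'M[C]_n) : psd S -> psd R -> S *m S = R *m R -> S = R.
Proof.
move=> psdS psdR SR; set D := S - R.
have hD : adjmx D = D by rewrite adjmxB -psdS.1 -psdR.1.
have SD : S *m D = - (D *m R).
  by apply/eqP; rewrite -addr_eq0 mulmxBr mulmxBl SR addrA subrK subrr.
have trDSD_ge0 : 0 <= \tr (adjmx D *m S *m D) by apply/psd_mxtrace_ge0/psd_conj.
have trDRD_ge0 : 0 <= \tr (adjmx D *m R *m D) by apply/psd_mxtrace_ge0/psd_conj.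
have /eqP : \tr (adjmx D *m S *m D) + \tr (adjmx D *m R *m D) = 0.
  by rewrite hD -mulmxA SD mulmxN linearN /= [\tr (D *m _)]mxtrace_mulC addNr.
rewrite paddr_eq0 // => /andP[/eqP/(psd_mxtrace_conj_eq0 psdS) S_D0].
move/eqP/(psd_mxtrace_conj_eq0 psdR) => R_D0.
have DD0 : \tr (adjmx D *m 1%:M *m D) = 0.
  by rewrite mulmx1 {2}/D hD mulmxBl S_D0 R_D0 subrr mxtrace0.
by apply/eqP; rewrite -subr_eq0 -/D -[D]mul1mx (psd_mxtrace_conj_eq0 (psd1 n) DD0).
Qed.

Lemma pdm_neg_psd n (R : 'M[C]_n) : psd R -> pdm_neg R = \tr R - 1.
Proof.
move=> psdR; rewrite /pdm_neg -psdR.1 /sqrtm; congr (\tr _ - 1).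
have [//|psdS SS] := epsilon_spec (inhabits 0) (fun S => psd S /\ S *m S = R *m R).
  by exists R.
exact: psd_sqr_inj.
Qed.

End Positivity.

Section PartialTrace.
Variable C : numClosedFieldType.

Lemma sum_natr_eq (I : finType) (i : I) (F : I -> C) : \sum_j (j == i)%:R * F j = F i.
Proof.
rewrite (bigD1 i) //= eqxx mul1r big1 ?addr0 // => j /negbTE ->.
by rewrite mul0r.
Qed.

Lemma sum_mxtens m n (F : 'I_(m * n) -> C) :
  \sum_k F k = \sum_i \sum_j F (mxtens_index (i, j)).
Proof.
rewrite pair_big /=; apply: reindex => /=.
exists (@mxtens_unindex m n) => [[i j] _|k _]; first by rewrite mxtens_indexK.
by rewrite -[RHS]mxtens_unindexK; case: (mxtens_unindex k).
Qed.

Lemma mxtensP m n p q (A B : 'M[C]_(m * n, p * q)) :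
  (forall i j k l, A (mxtens_index (i, j)) (mxtens_index (k, l))
                 = B (mxtens_index (i, j)) (mxtens_index (k, l))) -> A = B.
Proof.
move=> AB; apply/matrixP=> x y.
by case: (mxtens_indexP x) => i j; case: (mxtens_indexP y) => k l.
Qed.

Lemma ptr2_is_linear m n : linear (@ptr2 C m n).
Proof.
move=> a M N; apply/matrixP=> i j; rewrite !mxE mulr_sumr -big_split /=.
by apply: eq_bigr => k _; rewrite !mxE.
Qed.
HB.instance Definition _ m n :=
  GRing.isLinear.Build C 'M[C]_(m * n) 'M[C]_m _ (@ptr2 C m n) (@ptr2_is_linear m n).

Lemma ptr1_is_linear m n : linear (@ptr1 C m n).
Proof.
move=> a M N; apply/matrixP=> i j; rewrite !mxE mulr_sumr -big_split /=.
by apply: eq_bigr => k _; rewrite !mxE.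
Qed.
HB.instance Definition _ m n :=
  GRing.isLinear.Build C 'M[C]_(m * n) 'M[C]_n _ (@ptr1 C m n) (@ptr1_is_linear m n).

Lemma mxtrace_ptr2 m n (M : 'M[C]_(m * n)) : \tr (ptr2 M) = \tr M.
Proof. by rewrite /mxtrace sum_mxtens; apply: eq_bigr => i _; rewrite mxE. Qed.

Lemma mxtrace_ptr1 m n (M : 'M[C]_(m * n)) : \tr (ptr1 M) = \tr M.
Proof.
by rewrite /mxtrace sum_mxtens exchange_big; apply: eq_bigr => i _; rewrite mxE.
Qed.

Lemma mxtrace_tensmx1_mul m n (A : 'M[C]_m) (Y : 'M[C]_(m * n)) :
  \tr ((A *t (1%:M : 'M_n)) *m Y) = \tr (A *m ptr2 Y).
Proof.
rewrite /mxtrace sum_mxtens; apply: eq_bigr => i _.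
rewrite mxE; under eq_bigr do rewrite mxE sum_mxtens.
rewrite exchange_big; apply: eq_bigr => i' _; rewrite mxE mulr_sumr.
apply: eq_bigr => k _.
by under eq_bigr do rewrite tensmxE mxE -mulrA mulrCA eq_sym; rewrite sum_natr_eq.
Qed.

Lemma mxtrace_tens1mx_mul m n (B : 'M[C]_n) (Y : 'M[C]_(m * n)) :
  \tr (((1%:M : 'M_m) *t B) *m Y) = \tr (B *m ptr1 Y).
Proof.
rewrite /mxtrace sum_mxtens exchange_big; apply: eq_bigr => k _.
rewrite mxE; under [RHS]eq_bigr do rewrite mxE mulr_sumr.
rewrite [RHS]exchange_big; apply: eq_bigr => i _.
rewrite mxE sum_mxtens exchange_big; apply: eq_bigr => k' _.
by under eq_bigr do rewrite tensmxE mxE -mulrA eq_sym; rewrite sum_natr_eq.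
Qed.

Definition blk1 m n (p q : 'I_m) (X : 'M[C]_(m * n)) : 'M[C]_n :=
  \matrix_(a, b) X (mxtens_index (p, a)) (mxtens_index (q, b)).

Definition blk2 m n (a b : 'I_n) (X : 'M[C]_(m * n)) : 'M[C]_m :=
  \matrix_(p, q) X (mxtens_index (p, a)) (mxtens_index (q, b)).

Lemma ptr2_mul_tens1mx m n (X : 'M[C]_(m * n)) (B : 'M[C]_n) p q :
  ptr2 (X *m ((1%:M : 'M_m) *t B)) p q = \tr (blk1 p q X *m B).
Proof.
rewrite mxE; apply: eq_bigr => a _; rewrite !mxE sum_mxtens exchange_big.
apply: eq_bigr => b _.
under eq_bigr do rewrite tensmxE mxE mulrCA mulrA.
by rewrite -big_distrl /= sum_natr_eq mxE.
Qed.

Lemma ptr2_tens1mx_mul m n (X : 'M[C]_(m * n)) (B : 'M[C]_n) p q :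
  ptr2 (((1%:M : 'M_m) *t B) *m X) p q = \tr (B *m blk1 p q X).
Proof.
rewrite mxE; apply: eq_bigr => a _; rewrite !mxE sum_mxtens.
under eq_bigr do (under eq_bigr do rewrite tensmxE mxE -mulrA; rewrite -mulr_sumr eq_sym).
by rewrite sum_natr_eq; apply: eq_bigr => b _; rewrite mxE.
Qed.

Lemma ptr1_mul_tensmx1 m n (X : 'M[C]_(m * n)) (A : 'M[C]_m) a b :
  ptr1 (X *m (A *t (1%:M : 'M_n))) a b = \tr (blk2 a b X *m A).
Proof.
rewrite mxE; apply: eq_bigr => p _; rewrite !mxE sum_mxtens; apply: eq_bigr => q _.
under eq_bigr do rewrite tensmxE mxE mulrA mulrC.
by rewrite sum_natr_eq mxE.
Qed.

Lemma ptr1_tensmx1_mul m n (X : 'M[C]_(m * n)) (A : 'M[C]_m) a b :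
  ptr1 ((A *t (1%:M : 'M_n)) *m X) a b = \tr (A *m blk2 a b X).
Proof.
rewrite mxE; apply: eq_bigr => p _; rewrite !mxE sum_mxtens; apply: eq_bigr => q _.
under eq_bigr do rewrite tensmxE mxE -mulrA eq_sym.
by rewrite -mulr_sumr sum_natr_eq mxE.
Qed.

Lemma half_double m n (x : 'M[C]_(m, n)) : 2^-1 *: (x + x) = x.
Proof. by rewrite -mulr2n -scaler_nat scalerA mulVf ?scale1r // pnatr_eq0. Qed.

Lemma ptr2_jordan_tens1mx m n (X : 'M[C]_(m * n)) (B : 'M[C]_n) :
  ptr2 (2^-1 *: (((1%:M : 'M_m) *t B) *m X + X *m ((1%:M : 'M_m) *t B)))
  = ptr2 (X *m ((1%:M : 'M_m) *t B)).
Proof.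
rewrite linearZ linearD /=.
have -> : ptr2 (((1%:M : 'M_m) *t B) *m X) = ptr2 (X *m ((1%:M : 'M_m) *t B)).
  by apply/matrixP=> p q; rewrite ptr2_tens1mx_mul ptr2_mul_tens1mx mxtrace_mulC.
by rewrite half_double.
Qed.

Lemma ptr1_jordan_tensmx1 m n (X : 'M[C]_(m * n)) (A : 'M[C]_m) :
  ptr1 (2^-1 *: ((A *t (1%:M : 'M_n)) *m X + X *m (A *t (1%:M : 'M_n))))
  = ptr1 (X *m (A *t (1%:M : 'M_n))).
Proof.
rewrite linearZ linearD /=.
have -> : ptr1 ((A *t (1%:M : 'M_n)) *m X) = ptr1 (X *m (A *t (1%:M : 'M_n))).
  by apply/matrixP=> a b; rewrite ptr1_tensmx1_mul ptr1_mul_tensmx1 mxtrace_mulC.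
by rewrite half_double.
Qed.

Definition swapmx m n : 'M[C]_(m * n, n * m) :=
  \matrix_(x, y) (x == mxtens_index ((mxtens_unindex y).2, (mxtens_unindex y).1))%:R.

Lemma swapmx_conjE m n (X : 'M[C]_(m * n)) a b a' b' :
  (adjmx (swapmx m n) *m X *m swapmx m n) (mxtens_index (b, a)) (mxtens_index (b', a'))
  = X (mxtens_index (a, b)) (mxtens_index (a', b')).
Proof.
rewrite mxE; under eq_bigr do rewrite [swapmx _ _ _ _]mxE !mxtens_indexK mulrC.
rewrite sum_natr_eq mxE; under eq_bigr do rewrite adjmxE mxE rmorph_nat mxtens_indexK.
by rewrite sum_natr_eq.
Qed.

Lemma blk1_swapmx_conj m n (X : 'M[C]_(m * n)) p q :
  blk1 p q (adjmx (swapmx m n) *m X *m swapmx m n) = blk2 p q X.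
Proof. by apply/matrixP=> a b; rewrite [LHS]mxE [RHS]mxE swapmx_conjE. Qed.

Lemma ptr1_swapmx_conj m n (X : 'M[C]_(m * n)) :
  ptr1 (adjmx (swapmx m n) *m X *m swapmx m n) = ptr2 X.
Proof.
by apply/matrixP=> a b; rewrite mxE [RHS]mxE; apply: eq_bigr => k _; rewrite swapmx_conjE.
Qed.

End PartialTrace.

Section Pauli.
Variable C : numClosedFieldType.

Lemma pauli1_herm (x : 'I_4) : adjmx (pauli1 C x) = pauli1 C x.
Proof.
apply/matrixP=> r c; rewrite adjmxE.
case: x => [[|[|[|[|?]]]] ?] //=;
case: r => [[|[|?]] ?] //; case: c => [[|[|?]] ?] //; rewrite !mxE /=;
  by rewrite ?rmorph0 ?rmorph1 ?rmorphN /= ?conjCi ?opprK ?conjC1 ?conjC0.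
Qed.

Lemma pauli_herm n (j : n.-tuple 'I_4) : adjmx (pauli C j) = pauli C j.
Proof.
rewrite /pauli; move: (fun i => _) => f; elim: n f {j} => [|n IH] f /=.
  exact: adjmx1.
by rewrite adjmxT pauli1_herm IH.
Qed.

Lemma pauli1_completeness (p q r s : 'I_2) :
  \sum_(x < 4) pauli1 C x p q * pauli1 C x r s = 2 * ((p == s)%:R * (q == r)%:R).
Proof.
have ii : 'i * 'i = -1 :> C by rewrite -expr2 sqrCi.
rewrite !big_ord_recr big_ord0 /=.
case: p => [[|[|?]] ?] //; case: q => [[|[|?]] ?] //; case: r => [[|[|?]] ?] //;
  case: s => [[|[|?]] ?] //; rewrite !mxE /=.
all: try ring.
all: rewrite ?mulrNN ?mulNr ?mulrN ii; ring.
Qed.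

Lemma sum_tuple_cons (T : finType) n (F : n.+1.-tuple T -> C) :
  \sum_t F t = \sum_(x : T) \sum_(t : n.-tuple T) F [tuple of x :: t].
Proof.
rewrite pair_big /= (reindex (fun p : T * n.-tuple T => [tuple of p.1 :: p.2])) //=.
exists (fun t : n.+1.-tuple T => (thead t, [tuple of behead t])) => [[x t] _|t _].
  by congr (_, _); apply: val_inj.
by rewrite [RHS]tuple_eta.
Qed.

Lemma pauli_cons n x (t : n.-tuple 'I_4) :
  pauli C [tuple of x :: t] = pauli1 C x *t pauli C t.
Proof. by []. Qed.

Lemma pauli_completeness n (p q r s : 'I_(pow2 n)) :
  \sum_(j : n.-tuple 'I_4) pauli C j p q * pauli C j r s
  = 2 ^+ n * ((p == s)%:R * (q == r)%:R).
Proof.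
elim: n p q r s => [|n IH] p q r s.
  rewrite (big_pred1 [tuple]) => [|t]; last by apply/esym/eqP/tuple0.
  by rewrite !ord1 !mxE eqxx expr0 !mul1r.
case: (@mxtens_indexP 2 (pow2 n) p) => p1 p2.
case: (@mxtens_indexP 2 (pow2 n) q) => q1 q2.
case: (@mxtens_indexP 2 (pow2 n) r) => r1 r2.
case: (@mxtens_indexP 2 (pow2 n) s) => s1 s2.
rewrite sum_tuple_cons.
under eq_bigr do under eq_bigr do rewrite pauli_cons !tensmxE mulrACA.
under eq_bigr do rewrite -mulr_sumr IH.
rewrite -mulr_suml pauli1_completeness.
have E (a b : 'I_2) (c d : 'I_(pow2 n)) :
    (mxtens_index (a, c) == mxtens_index (b, d)) = (a == b) && (c == d).
  by rewrite (can_eq (@mxtens_indexK 2 (pow2 n))) xpair_eqE.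
by rewrite !E -!mulnb !natrM exprS; ring.
Qed.

Lemma pauli_mxtrace_expansion n (G : 'M[C]_(pow2 n)) p q :
  \sum_(j : n.-tuple 'I_4) \tr (pauli C j *m G) * pauli C j p q = 2 ^+ n * G p q.
Proof.
have E j : \tr (pauli C j *m G) * pauli C j p q
           = \sum_x \sum_y G y x * (pauli C j p q * pauli C j x y).
  rewrite mulr_suml; apply: eq_bigr => x _; rewrite mxE mulr_suml.
  by apply: eq_bigr => y _; ring.
under eq_bigr do rewrite E.
rewrite exchange_big; under eq_bigr do rewrite exchange_big.
under eq_bigr do under eq_bigr do rewrite -mulr_sumr pauli_completeness.
transitivity (\sum_x \sum_y (x == q)%:R * ((y == p)%:R * (2 ^+ n * G y x))).
  by do 2!apply: eq_bigr => ? _; rewrite [p == _]eq_sym [q == _]eq_sym; ring.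
by under eq_bigr do rewrite -mulr_sumr sum_natr_eq; rewrite sum_natr_eq.
Qed.

Lemma pauli_blk1 n k (X : 'M[C]_(pow2 n * k)) p q :
  \sum_(i : n.-tuple 'I_4) pauli C i p q *: ptr1 (X *m (pauli C i *t (1%:M : 'M_k)))
  = 2 ^+ n *: blk1 p q X.
Proof.
apply/matrixP=> a b; rewrite summxE.
under eq_bigr do rewrite mxE ptr1_mul_tensmx1 mxtrace_mulC mulrC.
by rewrite pauli_mxtrace_expansion !mxE.
Qed.

Lemma pauli_blk2 n k (X : 'M[C]_(k * pow2 n)) p q :
  \sum_(j : n.-tuple 'I_4) pauli C j p q *: ptr2 (X *m ((1%:M : 'M_k) *t pauli C j))
  = 2 ^+ n *: blk2 p q X.
Proof.
apply/matrixP=> a b; rewrite summxE.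
under eq_bigr do rewrite mxE ptr2_mul_tens1mx mxtrace_mulC mulrC.
by rewrite pauli_mxtrace_expansion !mxE.
Qed.

End Pauli.

Section Measurement.
Variable C : numClosedFieldType.

Lemma luders_diff n (S X : 'M[C]_n) :
  proj 1 S *m X *m proj 1 S - proj (-1) S *m X *m proj (-1) S
  = 2^-1 *: (S *m X + X *m S).
Proof.
rewrite /proj -!scalemxAl -!scalemxAr !scalerA !mulmxDl !mulmxDr !mul1mx !mulmx1.
rewrite -!scalemxAl -!scalemxAr !scalerA -scalerBr; apply/matrixP=> i j; rewrite !mxE.
by field.
Qed.

Lemma proj_sqrB n (S : 'M[C]_n) : proj 1 S *m proj 1 S - proj (-1) S *m proj (-1) S = S.
Proof. by have := luders_diff S 1%:M; rewrite !mulmx1 mul1mx half_double. Qed.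

Lemma corrE n (P : {linear 'M[C]_n -> 'M[C]_n}) rho S1 S2 :
  corr P rho S1 S2 = \tr (S2 *m P (2^-1 *: (S1 *m rho + rho *m S1))).
Proof.
have sandwich (A Y : 'M[C]_n) : \tr (A *m Y *m A) = \tr (A *m A *m Y).
  by rewrite mxtrace_mulC mulmxA.
rewrite /corr !big_cons !big_nil !sandwich -luders_diff -[S2 in RHS]proj_sqrB.
by rewrite linearB /= mulmxBl !mulmxBr !linearB /=; ring.
Qed.

End Measurement.

Section NoSignalling.
Variable C : numClosedFieldType.

Lemma adjmx_proj n b (S : 'M[C]_n) :
  b^* = b -> adjmx S = S -> adjmx (proj b S) = proj b S.
Proof.
move=> b_real hS; rewrite /proj adjmxZ adjmxD adjmx1 adjmxZ b_real hS.
by rewrite fmorphV rmorph_nat.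
Qed.

Lemma psd_luders n b (S X : 'M[C]_n) :
  b^* = b -> adjmx S = S -> psd X -> psd (proj b S *m X *m proj b S).
Proof. by move=> b_real hS; rewrite -{1}(adjmx_proj b_real hS); apply: psd_conj. Qed.

Lemma state_psd_mix n (rho X : 'M[C]_n) :
  state rho -> psd X -> exists2 k : C, k != 0 & state (k *: (rho + X)).
Proof.
move=> [psd_rho tr_rho] psdX; have tr_ge0 := psd_mxtrace_ge0 psdX.
have t_gt0 : 0 < 1 + \tr X by rewrite ltr_wpDr.
exists (1 + \tr X)^-1; first by rewrite invr_eq0 gt_eqF.
split; first by apply: psdZ; [rewrite invr_ge0 ltW | apply: psdD].
by rewrite mxtraceZ mxtraceD tr_rho mulVf // gt_eqF.
Qed.

Lemma linear_eq_on_psd n (V : lmodType C) (F G : {linear 'M[C]_n -> V})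
    (rho0 : 'M[C]_n) :
  state rho0 -> (forall rho, state rho -> F rho = G rho) ->
  forall X, psd X -> F X = G X.
Proof.
move=> rho0_state FG X psdX; have [k k_neq0 mix_state] := state_psd_mix rho0_state psdX.
move: (FG _ mix_state); rewrite !linearZ !linearD /= FG //.
by move/(scalerI k_neq0)/addrI.
Qed.

Lemma linear_eq_on_jordan n (V : lmodType C) (F G : {linear 'M[C]_n -> V})
    (S rho : 'M[C]_n) :
  (forall X, psd X -> F X = G X) -> adjmx S = S -> psd rho ->
  F (2^-1 *: (S *m rho + rho *m S)) = G (2^-1 *: (S *m rho + rho *m S)).
Proof.
move=> FG hS psd_rho; have real1 : (1 : C)^* = 1 := rmorph1 _.
have realN1 : (-1 : C)^* = -1 by rewrite rmorphN1.
by rewrite -luders_diff !linearB /= !FG //; apply: psd_luders.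
Qed.

Lemma corr_tensmx1 m n (P : {linear 'M[C]_(m * n) -> 'M[C]_(m * n)})
    (T : {linear 'M[C]_m -> 'M[C]_m}) rho S1 (A : 'M[C]_m) :
  (forall X, psd X -> ptr2 (P X) = T (ptr2 X)) -> psd rho -> adjmx S1 = S1 ->
  corr P rho S1 (A *t (1%:M : 'M_n))
  = \tr (A *m T (ptr2 (2^-1 *: (S1 *m rho + rho *m S1)))).
Proof.
move=> ns psd_rho hS1; rewrite corrE mxtrace_tensmx1_mul; congr (\tr (A *m _)).
exact: (linear_eq_on_jordan (F := @ptr2 C m n \o P) (G := T \o @ptr2 C m n)).
Qed.

Lemma corr_tens1mx m n (P : {linear 'M[C]_(m * n) -> 'M[C]_(m * n)})
    (S : {linear 'M[C]_n -> 'M[C]_n}) rho S1 (B : 'M[C]_n) :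
  (forall X, psd X -> ptr1 (P X) = S (ptr1 X)) -> psd rho -> adjmx S1 = S1 ->
  corr P rho S1 ((1%:M : 'M_m) *t B)
  = \tr (B *m S (ptr1 (2^-1 *: (S1 *m rho + rho *m S1)))).
Proof.
move=> ns psd_rho hS1; rewrite corrE mxtrace_tens1mx_mul; congr (\tr (B *m _)).
exact: (linear_eq_on_jordan (F := @ptr1 C m n \o P) (G := S \o @ptr1 C m n)).
Qed.

End NoSignalling.

Section Amplification.
Variable C : numClosedFieldType.

Lemma amplE k m n (Phi : 'M[C]_m -> 'M[C]_n) (X : 'M[C]_(k * m)) p a q b :
  ampl Phi X (mxtens_index (p, a)) (mxtens_index (q, b)) = Phi (blk1 p q X) a b.
Proof. by rewrite mxE !mxtens_indexK. Qed.

Lemma mxtrace_ampl k m (Phi : {linear 'M[C]_m -> 'M[C]_m}) (X : 'M[C]_(k * m)) :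
  \tr (ampl Phi X) = \tr (Phi (ptr1 X)).
Proof.
have -> : ptr1 X = \sum_p blk1 p p X.
  by apply/matrixP=> a b; rewrite mxE summxE; apply: eq_bigr => p _; rewrite mxE.
rewrite /mxtrace sum_mxtens linear_sum /=.
under [RHS]eq_bigr do rewrite summxE.
by rewrite [RHS]exchange_big; apply: eq_bigr => p _; apply: eq_bigr => a _; rewrite amplE.
Qed.

Lemma two_expr_neq0 k : (2 : C) ^+ k != 0.
Proof. by rewrite expf_neq0 // pnatr_eq0. Qed.

Lemma pauli_ampl nA nB (Phi : {linear 'M[C]_(pow2 nB) -> 'M[C]_(pow2 nB)})
    (X : 'M[C]_(pow2 nA * pow2 nB)) (Y : nA.-tuple 'I_4 -> 'M[C]_(pow2 nB)) :
  (forall p q, \sum_i pauli C i p q *: Y i = 2 ^+ nA *: blk1 p q X) ->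
  ((2 : C) ^+ (nA + nB))^-1 *:
    \sum_i \sum_l \tr (pauli C l *m Phi (Y i)) *: (pauli C i *t pauli C l)
  = ampl Phi X.
Proof.
move=> XY; apply: mxtensP => p a q b; rewrite amplE.
have -> : blk1 p q X = (2 ^+ nA)^-1 *: \sum_i pauli C i p q *: Y i.
  by rewrite XY scalerA mulVf ?scale1r ?two_expr_neq0.
rewrite [in RHS]linearZ [in RHS]linear_sum /= [LHS]mxE [RHS]mxE exprD invfM -mulrA.
congr (_ * _); rewrite !summxE mulr_sumr; apply: eq_bigr => i _.
rewrite summxE linearZ /= mxE.
under eq_bigr do rewrite mxE tensmxE mulrCA.
rewrite -mulr_sumr pauli_mxtrace_expansion.
by rewrite mulrCA mulKf ?two_expr_neq0.
Qed.

End Amplification.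

Section PseudoDensity.
Variable C : numClosedFieldType.
Variables nA nB : nat.
Variable P : {linear 'M[C]_(pow2 nA * pow2 nB) -> 'M[C]_(pow2 nA * pow2 nB)}.

Lemma R_A1B2_ampl (S : {linear 'M[C]_(pow2 nB) -> 'M[C]_(pow2 nB)}) rho :
  (forall X, psd X -> ptr1 (P X) = S (ptr1 X)) -> psd rho ->
  R_A1B2 P rho = ampl S rho.
Proof.
move=> ns psd_rho.
have corr_pauli i l : corr P rho (pauli C i *t 1%:M) (1%:M *t pauli C l)
    = \tr (pauli C l *m S (ptr1 (rho *m (pauli C i *t 1%:M)))).
  by rewrite (corr_tens1mx _ ns) ?ptr1_jordan_tensmx1 // adjmxT adjmx1 pauli_herm.
rewrite /R_A1B2; under eq_bigr do under eq_bigr do rewrite corr_pauli.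
by apply: pauli_ampl => p q; apply: pauli_blk1.
Qed.

Lemma R_B1A2_ampl (T : {linear 'M[C]_(pow2 nA) -> 'M[C]_(pow2 nA)}) rho :
  (forall X, psd X -> ptr2 (P X) = T (ptr2 X)) -> psd rho ->
  R_B1A2 P rho = ampl T (adjmx (swapmx C _ _) *m rho *m swapmx C _ _).
Proof.
move=> ns psd_rho.
have corr_pauli j k : corr P rho (1%:M *t pauli C j) (pauli C k *t 1%:M)
    = \tr (pauli C k *m T (ptr2 (rho *m (1%:M *t pauli C j)))).
  by rewrite (corr_tensmx1 _ ns) ?ptr2_jordan_tens1mx // adjmxT adjmx1 pauli_herm.
rewrite /R_B1A2 addnC; under eq_bigr do under eq_bigr do rewrite corr_pauli.
by apply: pauli_ampl => p q; rewrite blk1_swapmx_conj pauli_blk2.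
Qed.

End PseudoDensity.

Theorem corollary1 (C : numClosedFieldType) (nA nB : nat)
  (P : {linear 'M[C]_(pow2 nA * pow2 nB) -> 'M[C]_(pow2 nA * pow2 nB)}) :
  cp P -> tp P -> no_signalling P ->
  forall rho : 'M[C]_(pow2 nA * pow2 nB), state rho ->
    [/\ psd (R_B1A2 P rho), psd (R_A1B2 P rho),
        pdm_neg (R_B1A2 P rho) = 0 & pdm_neg (R_A1B2 P rho) = 0].
Proof.
move=> cpP tpP [T [S [cpT [cpS ns]]]] rho rho_state.
have [psd_rho tr_rho] := rho_state.
have nsT : forall X, psd X -> ptr2 (P X) = T (ptr2 X).
  apply: (linear_eq_on_psd (F := @ptr2 C _ _ \o P) (G := T \o @ptr2 C _ _) rho_state).
  by move=> r /ns[].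
have nsS : forall X, psd X -> ptr1 (P X) = S (ptr1 X).
  apply: (linear_eq_on_psd (F := @ptr1 C _ _ \o P) (G := S \o @ptr1 C _ _) rho_state).
  by move=> r /ns[].
rewrite (R_B1A2_ampl nsT psd_rho) (R_A1B2_ampl nsS psd_rho).
have psdB := cpT _ _ (psd_conj (swapmx C _ _) psd_rho).
have psdA := cpS _ _ psd_rho.
split=> //; rewrite pdm_neg_psd // mxtrace_ampl.
- by rewrite ptr1_swapmx_conj -nsT // mxtrace_ptr2 tpP tr_rho subrr.
- by rewrite -nsS // mxtrace_ptr1 tpP tr_rho subrr.
Qed.
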